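(* Let $L\subseteq Q$ be an extension of Lie algebras with $L$ semiprime. Then the following are equivalent: (i) $Q$ is an algebra of quotients of $L$; (ii) $Z(Q)=0$ and, for every $\mu\in A(Q)\setminus\{0\}$, there is an ideal $I$ of $L$ with $\mathrm{Ann}_L(I)=0$ such that $\mu\widetilde{I}\subseteq A_0$ and $0\neq \widetilde{I}\mu\subseteq A_0$, and moreover, if $\mu=\mathrm{ad}_q$ for some $q\in Q$, then also $\mu\widetilde{I}(L)\neq 0$ (i.e. there are $\alpha\in\widetilde I$ and $x\in L$ with $\mu(\alpha(x))\neq 0$).
   Context: All algebras are over a fixed commutative unital ring $\Phi$; associative algebras need not be unital. For a Lie algebra $Q$ and $x\in Q$, $\mathrm{ad}_x\colon Q\to Q$ is $y\mapsto[x,y]$, and $A(Q)$ is the associative subalgebra of $\mathrm{End}_\Phi(Q)$ generated by $\{\mathrm{ad}_x: x\in Q\}$. An extension of Lie algebras $L\subseteq Q$ means $L$ is a Lie subalgebra of $Q$. $A_Q(L)$ is the associative subalgebra of $A(Q)$ generated by $\{\mathrm{ad}_x:x\in L\}$ (operators on $Q$), and $A_0=\{\mu\in A(Q):\mu(L)\subseteq L\}$. For an ideal $I$ of $L$, $A_Q(I)$ is the subalgebra of $A(Q)$ generated by $\{\mathrm{ad}_x : x\in I\}$ and $\widetilde I$ denotes the two-sided ideal of $A_Q(L)$ generated by $\{\mathrm{ad}_x:x\in I\}$. For $X\subseteq L$, $\mathrm{Ann}_L(X)=\{a\in L: [a,x]=0\ \forall x\in X\}$ and $Z(L)=\mathrm{Ann}_L(L)$.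 A Lie algebra $L$ is semiprime if $[I,I]\neq0$ for every nonzero ideal $I$. $Q$ is an algebra of quotients of $L$ if for every nonzero $q\in Q$ there is an ideal $I$ of $L$ with $\mathrm{Ann}_L(I)=0$ and $0\neq[I,q]\subseteq L$. *)

(* Lie algebras over a commutative ring Phi, represented as
   Phi-modules (lmodType Phi) with a bracket; subsets as predicates Q -> Prop;
   operators on Q as functions Q -> Q (compared with Leibniz equality). *)
From mathcomp Require Import all_boot all_algebra.
Set Implicit Arguments.
Unset Strict Implicit.
Unset Printing Implicit Defensive.
Import GRing.Theory.
Local Open Scope ring_scope.

Section Lie.
Variables (Phi : comPzRingType) (Q : lmodType Phi) (br : Q -> Q -> Q).

Definition lie_bracket : Prop :=
  [/\ (forall a x y z, br (a *: x + y) z = a *: br x z + br y z),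
      (forall a x y z, br x (a *: y + z) = a *: br x y + br x z),
      (forall x, br x x = 0) &
      (forall x y z, br x (br y z) + br y (br z x) + br z (br x y) = 0)].

Definition submodule (S : Q -> Prop) : Prop :=
  [/\ S 0, (forall x y, S x -> S y -> S (x + y)) &
      (forall (a : Phi) x, S x -> S (a *: x))].

Definition lie_subalgebra (L : Q -> Prop) : Prop :=
  submodule L /\ (forall x y, L x -> L y -> L (br x y)).

Definition lie_ideal (L I : Q -> Prop) : Prop :=
  [/\ forall x, I x -> L x, submodule I &
      forall x y, L x -> I y -> I (br x y)].

Definition ann_zero (L X : Q -> Prop) : Prop :=
  forall a, L a -> (forall x, X x -> br a x = 0) -> a = 0.

Definition center_zero : Prop :=
  forall z, (forall y, br z y = 0) -> z = 0.

Definition semiprime (L : Q -> Prop) : Prop :=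
  forall I, lie_ideal L I -> (exists x, I x /\ x <> 0) ->
    exists x y, I x /\ I y /\ br x y <> 0.

Definition algebra_of_quotients (L : Q -> Prop) : Prop :=
  forall q, q <> 0 -> exists I, lie_ideal L I /\ ann_zero L I /\
    (forall x, I x -> L (br x q)) /\ (exists x, I x /\ br x q <> 0).

Definition ad (x : Q) : Q -> Q := fun y => br x y.

Definition op0 : Q -> Q := fun _ => 0.
Definition opadd (f g : Q -> Q) : Q -> Q := fun v => f v + g v.
Definition opscale (a : Phi) (f : Q -> Q) : Q -> Q := fun v => a *: f v.
Definition opmul (f g : Q -> Q) : Q -> Q := fun v => f (g v).

Inductive gen_alg (S : Q -> Prop) : (Q -> Q) -> Prop :=
  | ga_ad x : S x -> gen_alg S (ad x)
  | ga_0 : gen_alg S op0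
  | ga_add f g : gen_alg S f -> gen_alg S g -> gen_alg S (opadd f g)
  | ga_scale a f : gen_alg S f -> gen_alg S (opscale a f)
  | ga_mul f g : gen_alg S f -> gen_alg S g -> gen_alg S (opmul f g).

Definition AQ : (Q -> Q) -> Prop := gen_alg (fun _ => True).
Definition AQL (L : Q -> Prop) : (Q -> Q) -> Prop := gen_alg L.
Definition A0 (L : Q -> Prop) (mu : Q -> Q) : Prop :=
  AQ mu /\ forall x, L x -> L (mu x).

Inductive tilde (L I : Q -> Prop) : (Q -> Q) -> Prop :=
  | ti_ad x : I x -> tilde L I (ad x)
  | ti_0 : tilde L I op0
  | ti_add f g : tilde L I f -> tilde L I g -> tilde L I (opadd f g)
  | ti_scale a f : tilde L I f -> tilde L I (opscale a f)
  | ti_mull a f : AQL L a -> tilde L I f -> tilde L I (opmul a f)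
  | ti_mulr f a : tilde L I f -> AQL L a -> tilde L I (opmul f a).

End Lie.

(* Call an ideal of L dense when its annihilator in L is zero.  Semiprimeness
   makes dense ideals closed under intersection and under passing to the span
   of the brackets [M, M]; in particular an element of L that kills [M, M] for
   a dense ideal M is zero.
   (i) => (ii): in an algebra of quotients every q has, inside any dense ideal
   K, a dense ideal I of denominators with [I, q] in K.  An induction over the
   generators of A(Q) then gives, for every mu in A(Q), a dense ideal I with
   mu(I) in L and [I, mu(L)] in L, which is the ideal required by (ii); the
   non-vanishing clauses hold because a dense ideal has zero annihilator in Q.
   (ii) => (i): for q <> 0, the ideal I given by (ii) for mu = ad_q sends L into
   the ideal of denominators of q; that ideal contains all [m, m'] with m, m'
   in I, hence is dense, and the last clause of (ii) shows it does not
   annihilate q. *)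

From mathcomp Require Import all_boot all_algebra.
From Stdlib Require Import Classical FunctionalExtensionality.
Import GRing.Theory.
Local Open Scope ring_scope.
Set Implicit Arguments.
Unset Strict Implicit.

Section Submodule.
Variables (Phi : comPzRingType) (Q : lmodType Phi) (S : Q -> Prop).
Hypothesis subS : submodule S.

Lemma submod0 : S 0.
Proof. by case: subS. Qed.

Lemma submodD x y : S x -> S y -> S (x + y).
Proof. by case: subS => _ + _; apply. Qed.

Lemma submodZ [a x] : S x -> S (a *: x).
Proof. by case: subS => _ _; apply. Qed.

Lemma submodN x : S x -> S (- x).
Proof. by rewrite -scaleN1r; apply: submodZ. Qed.

Lemma submodB x y : S x -> S y -> S (x - y).
Proof. by move=> Sx /submodN; apply: submodD. Qed.

End Submodule.

Section LieAlgebra.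
Variables (Phi : comPzRingType) (Q : lmodType Phi) (br : Q -> Q -> Q).
Hypothesis lieQ : lie_bracket br.

Lemma brDl x y z : br (x + y) z = br x z + br y z.
Proof. by case: lieQ => + _ _ _ => /(_ 1 x y z); rewrite !scale1r. Qed.

Lemma brDr x y z : br x (y + z) = br x y + br x z.
Proof. by case: lieQ => _ + _ _ => /(_ 1 x y z); rewrite !scale1r. Qed.

Lemma br0l z : br 0 z = 0.
Proof. by apply: (@addrI _ (br 0 z)); rewrite addr0 -brDl addr0. Qed.

Lemma br0r z : br z 0 = 0.
Proof. by apply: (@addrI _ (br z 0)); rewrite addr0 -brDr addr0. Qed.

Lemma brZl a x z : br (a *: x) z = a *: br x z.
Proof. by case: lieQ => + _ _ _ => /(_ a x 0 z); rewrite !addr0 br0l addr0. Qed.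

Lemma brZr a x z : br x (a *: z) = a *: br x z.
Proof. by case: lieQ => _ + _ _ => /(_ a x z 0); rewrite !addr0 br0r addr0. Qed.

Lemma brNr x z : br x (- z) = - br x z.
Proof. by rewrite -scaleN1r brZr scaleN1r. Qed.

Lemma brC x y : br x y = - br y x.
Proof.
case: lieQ => _ _ brxx _; apply/eqP; rewrite -addr_eq0.
by have := brxx (x + y); rewrite brDl !brDr !brxx add0r addr0 => ->.
Qed.

Lemma br_leibniz x y z : br x (br y z) = br (br x y) z + br y (br x z).
Proof.
case: lieQ => _ _ _ /(_ x y z) /eqP.
rewrite (brC z x) (brC z (br x y)) brNr -subr_eq0 subr0 => /eqP jac.
by apply/eqP; rewrite -subr_eq0 -jac opprD addrA addrAC.
Qed.

Section GeneratedAlgebra.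
Variable S : Q -> Prop.

Lemma gen_algD f x y : gen_alg br S f -> f (x + y) = f x + f y.
Proof.
move=> gf; elim: gf x y => [z _| |g h _ IHg _ IHh|a g _ IHg|g h _ IHg _ IHh] x y.
- exact: brDr.
- by rewrite /op0 addr0.
- by rewrite /opadd IHg IHh addrACA.
- by rewrite /opscale IHg scalerDr.
- by rewrite /opmul IHh IHg.
Qed.

Lemma gen_algZ f a x : gen_alg br S f -> f (a *: x) = a *: f x.
Proof.
move=> gf; elim: gf x => [z _| |g h _ IHg _ IHh|c g _ IHg|g h _ IHg _ IHh] x.
- exact: brZr.
- by rewrite /op0 scaler0.
- by rewrite /opadd IHg IHh scalerDr.
- by rewrite /opscale IHg !scalerA mulrC.
- by rewrite /opmul IHh IHg.
Qed.

Lemma gen_alg0 f : gen_alg br S f -> f 0 = 0.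
Proof. by move=> /(gen_algZ 0 0); rewrite !scale0r. Qed.

Lemma gen_alg_mono (T : Q -> Prop) f :
  (forall x, S x -> T x) -> gen_alg br S f -> gen_alg br T f.
Proof.
move=> ST; elim=> [x Sx| |*|*|*]; [exact/ga_ad/ST | exact: ga_0 | exact: ga_add |
  exact: ga_scale | exact: ga_mul].
Qed.

End GeneratedAlgebra.

Variable L : Q -> Prop.

Section Ideal.
Variable I : Q -> Prop.
Hypothesis idI : lie_ideal br L I.

Lemma ideal_sub x : I x -> L x.
Proof. by case: idI => + _ _; apply. Qed.

Lemma ideal_submod : submodule I.
Proof. by case: idI. Qed.

Lemma ideal_brl x y : L x -> I y -> I (br x y).
Proof. by case: idI => _ _; apply. Qed.

Lemma ideal_brr x y : I y -> L x -> I (br y x).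
Proof. by move=> Iy Lx; rewrite brC; apply/(submodN ideal_submod)/ideal_brl. Qed.

End Ideal.

Hypothesis subL : lie_subalgebra br L.
Hypothesis semiprimeL : semiprime br L.

Lemma L_submod : submodule L.
Proof. by case: subL. Qed.

Lemma L_br x y : L x -> L y -> L (br x y).
Proof. by case: subL => _; apply. Qed.

Lemma ideal_full : lie_ideal br L L.
Proof. by split=> //; [exact: L_submod | exact: L_br]. Qed.

Lemma idealI I J : lie_ideal br L I -> lie_ideal br L J ->
  lie_ideal br L (fun x => I x /\ J x).
Proof.
move=> idI idJ; split.
- by move=> x [/(ideal_sub idI)].
- have [subI subJ] := (ideal_submod idI, ideal_submod idJ).
  split; first by split; [exact: (submod0 subI) | exact: (submod0 subJ)].
  + move=> x y [Ix Jx] [Iy Jy].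
    by split; [exact: (submodD subI Ix Iy) | exact: (submodD subJ Jx Jy)].
  + move=> a x [Ix Jx].
    by split; [exact: (submodZ subI Ix) | exact: (submodZ subJ Jx)].
- by move=> x y Lx [Iy Jy]; split; apply: ideal_brl.
Qed.

Definition annihilator (P : Q -> Prop) r := L r /\ forall p, P p -> br r p = 0.

Lemma ideal_annihilator P : lie_ideal br L P -> lie_ideal br L (annihilator P).
Proof.
move=> idP; split; first by move=> x [].
- split; first by split; [exact: (submod0 L_submod) | move=> p _; rewrite br0l].
  + move=> x y [Lx xP] [Ly yP]; split; first exact: (submodD L_submod Lx Ly).
    by move=> p Pp; rewrite brDl xP // yP // addr0.
  + move=> a x [Lx xP]; split; first exact: (submodZ L_submod Lx).
    by move=> p Pp; rewrite brZl xP // scaler0.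
- move=> x r Lx [Lr rP]; split; first exact: L_br.
  move=> p Pp; have := br_leibniz x r p.
  by rewrite rP // br0r rP ?addr0 //; apply: ideal_brl.
Qed.

Lemma abelian_ideal_eq0 R x : lie_ideal br L R ->
  (forall y z, R y -> R z -> br y z = 0) -> R x -> x = 0.
Proof.
move=> idR abR Rx; apply: NNPP => x_neq0.
have [y [z [Ry [Rz]]]] := semiprimeL idR (ex_intro _ x (conj Rx x_neq0)).
by apply; apply: abR.
Qed.

Lemma ideal_centralizer_eq0 P r : lie_ideal br L P -> P r ->
  (forall p, P p -> br r p = 0) -> r = 0.
Proof.
move=> idP Pr rP.
apply: (abelian_ideal_eq0 (idealI idP (ideal_annihilator idP))).
- by move=> y z [_ [_ yP]] [Pz _]; apply: yP.
- by split=> //; split=> //; apply: ideal_sub idP _ _.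
Qed.

Definition dense I := lie_ideal br L I /\ ann_zero br L I.

Lemma dense_full : dense L.
Proof.
split=> [|a La]; first exact: ideal_full.
exact: ideal_centralizer_eq0 ideal_full La.
Qed.

Lemma denseI K J : dense K -> dense J -> dense (fun x => K x /\ J x).
Proof.
move=> [idK annK] [idJ annJ]; split; first exact: idealI.
move=> n Ln nKJ; apply: annK => // k Kk; have Lnk := L_br Ln (ideal_sub idK Kk).
apply: annJ => // j Jj; have Lj := ideal_sub idJ Jj.
have nkj_K := ideal_brr idK (ideal_brl idK Ln Kk) Lj.
have nkj_J := ideal_brl idJ Lnk Jj.
(* [[n, k], j] lies in K ∩ J and, like n, annihilates K ∩ J. *)
apply: (ideal_centralizer_eq0 (idealI idK idJ) (conj nkj_K nkj_J)).
have idN := ideal_annihilator (idealI idK idJ).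
exact: (ideal_brr idN (ideal_brr idN (conj Ln nKJ) (ideal_sub idK Kk)) Lj).2.
Qed.

Inductive bracket_span (M : Q -> Prop) : Q -> Prop :=
  | bs_br m m' : M m -> M m' -> bracket_span M (br m m')
  | bs_0 : bracket_span M 0
  | bs_add x y : bracket_span M x -> bracket_span M y -> bracket_span M (x + y)
  | bs_scale (a : Phi) x : bracket_span M x -> bracket_span M (a *: x).

Lemma ideal_bracket_span M : lie_ideal br L M -> lie_ideal br L (bracket_span M).
Proof.
move=> idM; split.
- move=> x; elim=> [m m' Mm Mm'| |y z _ Ly _ Lz|a y _ Ly].
  + exact: (L_br (ideal_sub idM Mm) (ideal_sub idM Mm')).
  + exact: (submod0 L_submod).
  + exact: (submodD L_submod Ly Lz).
  + exact: (submodZ L_submod Ly).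
- by split; [exact: bs_0 | exact: bs_add | exact: bs_scale].
- move=> x z Lx; elim=> [m m' Mm Mm'| |u w _ ? _ ?|a u _ ?].
  + by rewrite br_leibniz; apply: bs_add; apply: bs_br => //; apply: ideal_brl.
  + by rewrite br0r; apply: bs_0.
  + by rewrite brDr; apply: bs_add.
  + by rewrite brZr; apply: bs_scale.
Qed.

Lemma ann_brackets_eq0 M a : dense M -> L a ->
  (forall m m', M m -> M m' -> br a (br m m') = 0) -> a = 0.
Proof.
move=> [idM annM] La aMM.
have idA := ideal_annihilator (ideal_bracket_span idM).
have idAM := idealI idA idM.
have aS : annihilator (bracket_span M) a.
  split=> // p; elim=> [u u' Mu Mu'| |u w _ au _ aw|c u _ au].
  - exact: aMM.
  - by rewrite br0r.
  - by rewrite brDr au aw addr0.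
  - by rewrite brZr au scaler0.
have AM_abelian y z : annihilator (bracket_span M) y /\ M y ->
    annihilator (bracket_span M) z /\ M z -> br y z = 0.
  move=> [Ay My] [_ Mz]; have Lz := ideal_sub idM Mz.
  apply: (ideal_centralizer_eq0 idAM (conj (ideal_brr idA Ay Lz) (ideal_brr idM My Lz))).
  by move=> p [[_ pS] _]; rewrite brC pS ?oppr0 //; exact: bs_br.
apply: annM => // m Mm; apply: (abelian_ideal_eq0 idAM AM_abelian).
exact: (conj (ideal_brr idA aS (ideal_sub idM Mm)) (ideal_brl idM La Mm)).
Qed.

Lemma dense_bracket_span M : dense M -> dense (bracket_span M).
Proof.
move=> dM; split; first exact/ideal_bracket_span/dM.1.
move=> a La aS; apply: (ann_brackets_eq0 dM La) => m m' Mm Mm'.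
exact/aS/bs_br.
Qed.

Lemma AQL_ideal I f x : lie_ideal br L I -> AQL br L f -> I x -> I (f x).
Proof.
move=> idI gf; have subI := ideal_submod idI.
elim: gf x => [y Ly| |g h _ IHg _ IHh|a g _ IHg|g h _ IHg _ IHh] x.
- exact: ideal_brl.
- by rewrite /op0 => _; exact: (submod0 subI).
- by move=> Ix; exact: (submodD subI (IHg _ Ix) (IHh _ Ix)).
- by move=> Ix; exact: (submodZ subI (IHg _ Ix)).
- by move=> /IHh /IHg.
Qed.

Definition bracket_sub (I K : Q -> Prop) v := forall y, I y -> K (br y v).

Lemma AQL_bracket_sub I f v : lie_ideal br L I -> AQL br L f ->
  bracket_sub I L v -> bracket_sub I L (f v).
Proof.
move=> idI gf; elim: gf v => [x Lx| |g h _ IHg _ IHh|a g _ IHg|g h _ IHg _ IHh] v Iv.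
- move=> y Iy; rewrite /ad br_leibniz.
  exact: (submodD L_submod (Iv _ (ideal_brr idI Iy Lx)) (L_br Lx (Iv _ Iy))).
- by move=> y _; rewrite /op0 br0r; exact: (submod0 L_submod).
- move=> y Iy; rewrite /opadd brDr.
  exact: (submodD L_submod (IHg _ Iv _ Iy) (IHh _ Iv _ Iy)).
- by move=> y Iy; rewrite /opscale brZr; exact: (submodZ L_submod (IHg _ Iv _ Iy)).
- exact/IHg/IHh.
Qed.

Lemma tilde_AQL I f : lie_ideal br L I -> tilde br L I f -> AQL br L f.
Proof.
move=> idI; elim=> [x Ix| |*|*|*|*]; [exact/ga_ad/(ideal_sub idI) | exact: ga_0 |
  exact: ga_add | exact: ga_scale | exact: ga_mul | exact: ga_mul].
Qed.

Lemma tilde_ideal I f x : lie_ideal br L I -> tilde br L I f -> L x -> I (f x).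
Proof.
move=> idI tf; have subI := ideal_submod idI.
elim: tf x => [y Iy| |g h _ IHg _ IHh|a g _ IHg|b g Ab _ IHg|g b _ IHg Ab] x Lx.
- exact: ideal_brr.
- exact: (submod0 subI).
- exact: (submodD subI (IHg _ Lx) (IHh _ Lx)).
- exact: (submodZ subI (IHg _ Lx)).
- exact: (AQL_ideal idI Ab (IHg _ Lx)).
- exact: (IHg _ (AQL_ideal ideal_full Ab Lx)).
Qed.

Lemma tilde_bracket_sub I f v : lie_ideal br L I -> tilde br L I f ->
  bracket_sub I L v -> L (f v).
Proof.
move=> idI tf.
elim: tf v => [y Iy| |g h _ IHg _ IHh|a g _ IHg|b g Ab _ IHg|g b _ IHg Ab] v Iv.
- exact: Iv.
- exact: (submod0 L_submod).
- exact: (submodD L_submod (IHg _ Iv) (IHh _ Iv)).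
- exact: (submodZ L_submod (IHg _ Iv)).
- exact: (AQL_ideal ideal_full Ab (IHg _ Iv)).
- exact: (IHg _ (AQL_bracket_sub idI Ab Iv)).
Qed.

(* [mu] has dense denominators: it maps some dense [K0] into a given dense [K],
   and carries every [v] with [[J, v] ⊆ K0] to some [mu v] with [[I, mu v] ⊆ K]
   for a dense [I].  The second clause is what makes the property stable under
   composition. *)
Definition dense_regular (mu : Q -> Q) := forall K, dense K ->
  exists2 K0, dense K0 & (forall z, K0 z -> K (mu z)) /\
    forall J, dense J -> exists2 I, dense I &
      forall v, bracket_sub J K0 v -> bracket_sub I K (mu v).

Lemma op0_dense_regular : dense_regular (@op0 _ Q).
Proof.
move=> K dK; have subK := ideal_submod dK.1.
exists K => //; split=> [z _ | J dJ]; first exact: (submod0 subK).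
by exists J => // v _ y _; rewrite /op0 br0r; exact: (submod0 subK).
Qed.

Lemma opadd_dense_regular f g :
  dense_regular f -> dense_regular g -> dense_regular (opadd f g).
Proof.
move=> rf rg K dK; have subK := ideal_submod dK.1.
have [Kf dKf [fK fJ]] := rf K dK.
have [Kg dKg [gK gJ]] := rg K dK.
exists (fun x => Kf x /\ Kg x); first exact: denseI.
split=> [z [Kfz Kgz] | J dJ]; first exact: (submodD subK (fK _ Kfz) (gK _ Kgz)).
have [If dIf fIK] := fJ J dJ.
have [Ig dIg gIK] := gJ J dJ.
exists (fun x => If x /\ Ig x); first exact: denseI.
move=> v Jv y [Ify Igy]; rewrite /opadd brDr.
have Jvf : bracket_sub J Kf v by move=> y' /Jv [].
have Jvg : bracket_sub J Kg v by move=> y' /Jv [].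
exact: (submodD subK (fIK v Jvf y Ify) (gIK v Jvg y Igy)).
Qed.

Lemma opscale_dense_regular a f : dense_regular f -> dense_regular (opscale a f).
Proof.
move=> rf K dK; have subK := ideal_submod dK.1.
have [K0 dK0 [fK fJ]] := rf K dK.
exists K0 => //; split=> [z K0z | J dJ]; first exact: (submodZ subK (fK _ K0z)).
have [I dI fIK] := fJ J dJ.
exists I => // v Jv y Iy; rewrite /opscale brZr; exact: (submodZ subK (fIK v Jv y Iy)).
Qed.

Lemma opmul_dense_regular f g :
  dense_regular f -> dense_regular g -> dense_regular (opmul f g).
Proof.
move=> rf rg K dK.
have [K1 dK1 [fK fJ]] := rf K dK.
have [K0 dK0 [gK gJ]] := rg K1 dK1.
exists K0 => //; split=> [z /gK /fK // | J dJ].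
have [I1 dI1 gIK] := gJ J dJ.
have [I dI fIK] := fJ I1 dI1.
by exists I => // v /gIK /fIK.
Qed.

Definition criterion_ideal (mu : Q -> Q) (I : Q -> Prop) :=
  lie_ideal br L I /\ ann_zero br L I /\
  (forall alpha, tilde br L I alpha -> A0 br L (opmul mu alpha)) /\
  (forall alpha, tilde br L I alpha -> A0 br L (opmul alpha mu)) /\
  (exists alpha, tilde br L I alpha /\ opmul alpha mu <> @op0 _ Q) /\
  ((exists q, mu = ad br q) ->
     exists alpha x, tilde br L I alpha /\ L x /\ mu (alpha x) <> 0).

Definition quotient_criterion := center_zero br /\
  forall mu, AQ br mu -> mu <> @op0 _ Q -> exists I, criterion_ideal mu I.

Section Quotients.
Hypothesis quotQ : algebra_of_quotients br L.

Lemma quotients_center_zero : center_zero br.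
Proof.
move=> z zQ; apply: NNPP => z_neq0.
have [I [_ [_ [_ [x [_]]]]]] := quotQ z_neq0.
by rewrite brC zQ oppr0.
Qed.

Lemma dense_ann_eq0 I u : dense I -> (forall y, I y -> br y u = 0) -> u = 0.
Proof.
move=> [idI annI] Iu; apply: NNPP => u_neq0.
have [J [idJ [_ [JuL [j [Jj ju_neq0]]]]]] := quotQ u_neq0.
apply: ju_neq0; apply: annI; first exact: JuL.
move=> y Iy; have Iyj := ideal_brr idI Iy (ideal_sub idJ Jj).
by rewrite brC br_leibniz (Iu y Iy) br0r (Iu _ Iyj) addr0 oppr0.
Qed.

Lemma dense_denominator q K : dense K ->
  exists2 I, dense I & (forall y, I y -> K y) /\ bracket_sub I K q.
Proof.
move=> dK; have [idK subK] := (dK.1, ideal_submod dK.1).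
have [->|q_neq0] := classic (q = 0).
  by exists K => //; split=> // y _; rewrite br0r; exact: (submod0 subK).
have [J [idJ [annJ [JqL _]]]] := quotQ q_neq0.
exists (bracket_span (fun x => K x /\ J x)).
  exact/dense_bracket_span/(denseI dK).
split=> y; elim=> [m m' [Km Jm] [Km' Jm']| |u w _ Ku _ Kw|a u _ Ku].
- exact: (ideal_brr idK Km (ideal_sub idJ Jm')).
- exact: (submod0 subK).
- exact: (submodD subK Ku Kw).
- exact: (submodZ subK Ku).
- (* [[m, m'], q] = [m, [m', q]] - [m', [m, q]], and [m, q], [m', q] lie in L *)
  rewrite -[br (br m m') q](addrK (br m' (br m q))) -br_leibniz.
  exact: (submodB subK (ideal_brr idK Km (JqL _ Jm')) (ideal_brr idK Km' (JqL _ Jm))).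
- by rewrite br0l; exact: (submod0 subK).
- by rewrite brDl; exact: (submodD subK Ku Kw).
- by rewrite brZl; exact: (submodZ subK Ku).
Qed.

Lemma ad_dense_regular q : dense_regular (ad br q).
Proof.
move=> K dK; have subK := ideal_submod dK.1.
have [K0 dK0 [K0K K0q]] := dense_denominator q dK.
exists K0 => //; split=> [z K0z | J dJ].
  by rewrite /ad brC; exact: (submodN subK (K0q _ K0z)).
have [I dI [IJ Iq]] := dense_denominator q dJ.
exists I => // v Jv y Iy; rewrite /ad br_leibniz.
apply: (submodD subK (K0K _ (Jv _ (Iq _ Iy)))).
by rewrite brC; exact: (submodN subK (K0q _ (Jv _ (IJ _ Iy)))).
Qed.

Lemma AQ_dense_regular mu : AQ br mu -> dense_regular mu.
Proof.
elim=> [q _| |f g _ ? _ ?|a f _ ?|f g _ ? _ ?]; [exact: ad_dense_regular |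
  exact: op0_dense_regular | exact: opadd_dense_regular |
  exact: opscale_dense_regular | exact: opmul_dense_regular].
Qed.

Lemma AQ_dense_ideal mu : AQ br mu -> exists2 I, dense I &
  (forall z, I z -> L (mu z)) /\ forall x, L x -> bracket_sub I L (mu x).
Proof.
move=> Amu; have [K0 dK0 [muK0 muJ]] := AQ_dense_regular Amu dense_full.
have [I0 dI0 muI0] := muJ K0 dK0.
exists (fun z => I0 z /\ K0 z); first exact: denseI.
split=> [z [_ K0z] | x Lx y [I0y _]]; first exact: muK0.
by apply: muI0 I0y => k K0k; exact: (ideal_brr dK0.1 K0k Lx).
Qed.

Lemma tilde_opmul_neq0 I mu : dense I -> mu <> @op0 _ Q ->
  exists2 alpha, tilde br L I alpha & opmul alpha mu <> @op0 _ Q.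
Proof.
move=> dI mu_neq0.
have [w muw_neq0] : exists w, mu w <> 0.
  apply: NNPP => mu0; apply: mu_neq0; apply: functional_extensionality => w.
  by apply: NNPP => muw; apply: mu0; exists w.
have [y Iy yw_neq0] : exists2 y, I y & br y (mu w) <> 0.
  apply: NNPP => I0; apply/muw_neq0/(dense_ann_eq0 dI) => y Iy.
  by apply: NNPP => yw; apply: I0; exists y.
exists (ad br y); first exact: ti_ad.
by move=> E; apply: yw_neq0; exact: (congr1 (fun f => f w) E).
Qed.

Lemma ad_tilde_neq0 I q : dense I -> q <> 0 ->
  exists alpha x, tilde br L I alpha /\ L x /\ ad br q (alpha x) <> 0.
Proof.
move=> dI q_neq0; apply: NNPP => no_alpha.
have q_kills y x : I y -> L x -> br q (br y x) = 0.
  move=> Iy Lx; apply: NNPP => qyx; apply: no_alpha.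
  by exists (ad br y), x; split; [exact: ti_ad | split].
have [J [idJ [_ [JqL [j [Jj jq_neq0]]]]]] := quotQ q_neq0.
apply/jq_neq0/(ann_brackets_eq0 dI (JqL _ Jj)) => m m' Im Im'.
have [Lj Lm'] := (ideal_sub idJ Jj, ideal_sub dI.1 Im').
have Imm' := ideal_brr dI.1 Im Lm'.
(* [[j, q], [m, m']] = [j, [q, [m, m']]] - [q, [j, [m, m']]] and both terms vanish *)
have := br_leibniz j q (br m m').
rewrite (q_kills m m') // br0r (brC j (br m m')) brNr (q_kills _ j) //.
by rewrite oppr0 addr0 => /esym.
Qed.

Lemma quotients_criterion : quotient_criterion.
Proof.
split=> [|mu Amu mu_neq0]; first exact: quotients_center_zero.
have [I dI [muI muIL]] := AQ_dense_ideal Amu.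
have [idI annI] := dI.
have A_tilde alpha : tilde br L I alpha -> AQ br alpha.
  by move=> /(tilde_AQL idI); apply: gen_alg_mono.
exists I; split=> //; split=> //; split; last split; last split.
- move=> alpha ta; split; first exact: (ga_mul Amu (A_tilde _ ta)).
  by move=> x Lx; exact/muI/(tilde_ideal idI ta).
- move=> alpha ta; split; first exact: (ga_mul (A_tilde _ ta) Amu).
  by move=> x Lx; exact/(tilde_bracket_sub idI ta)/muIL.
- by have [alpha ta alpha_mu] := tilde_opmul_neq0 dI mu_neq0; exists alpha.
- move=> [q mu_q]; rewrite mu_q; apply: ad_tilde_neq0 => // q0; apply: mu_neq0.
  by rewrite mu_q q0; apply: functional_extensionality => y; exact: br0l.
Qed.

End Quotients.

(* The ideal of denominators of [q]: the largest ideal of [L] whose bracket with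
   [q] lies in [L]. *)
Definition denominator_ideal q z :=
  [/\ L z, L (br q z) & forall b, AQL br L b -> L (br q (b z))].

Lemma ideal_denominator_ideal q : lie_ideal br L (denominator_ideal q).
Proof.
have [L0 LD LZ] := L_submod.
split; first by move=> z [].
- split.
  + split=> [||b Ab]; [exact: L0 | rewrite br0r; exact: L0 |].
    by rewrite (gen_alg0 Ab) br0r; exact: L0.
  + move=> x y [Lx Lqx Lqbx] [Ly Lqy Lqby]; split=> [||b Ab]; first exact: LD.
      by rewrite brDr; exact: LD.
    by rewrite (gen_algD _ _ Ab) brDr; exact: LD (Lqbx _ Ab) (Lqby _ Ab).
  + move=> a x [Lx Lqx Lqbx]; split=> [||b Ab]; first exact: LZ.
      by rewrite brZr; exact: LZ.
    by rewrite (gen_algZ _ _ Ab) brZr; exact: LZ (Lqbx _ Ab).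
- move=> x z Lx [Lz Lqz Lqbz]; split=> [||b Ab]; first exact: L_br.
    exact: (Lqbz _ (ga_ad _ Lx)).
  exact: (Lqbz _ (ga_mul Ab (ga_ad _ Lx))).
Qed.

Lemma tilde_denominator_ideal q I alpha x : lie_ideal br L I ->
  (forall alpha, tilde br L I alpha -> A0 br L (opmul (ad br q) alpha)) ->
  tilde br L I alpha -> L x -> denominator_ideal q (alpha x).
Proof.
move=> idI qI ta Lx; split.
- exact: (ideal_sub idI (tilde_ideal idI ta Lx)).
- exact: (qI _ ta).2.
- by move=> b Ab; exact: (qI _ (ti_mull Ab ta)).2.
Qed.

Lemma dense_denominator_ideal q I : dense I ->
  (forall alpha, tilde br L I alpha -> A0 br L (opmul (ad br q) alpha)) ->
  dense (denominator_ideal q).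
Proof.
move=> dI qI; split=> [|a La aD]; first exact: ideal_denominator_ideal.
apply: (ann_brackets_eq0 dI La) => m m' Im Im'; apply: aD.
exact: (tilde_denominator_ideal dI.1 qI (ti_ad _ _ Im) (ideal_sub dI.1 Im')).
Qed.

Lemma criterion_quotients : quotient_criterion -> algebra_of_quotients br L.
Proof.
move=> [centerQ crit] q q_neq0.
have adq_neq0 : ad br q <> @op0 _ Q.
  by move=> adq0; apply/q_neq0/centerQ => y; exact: (congr1 (fun f => f y) adq0).
have Aq : AQ br (ad br q) by exact: ga_ad.
have [I [idI [annI [qI [_ [_ qIL]]]]]] := crit _ Aq adq_neq0.
have [alpha [x [ta [Lx qax]]]] := qIL (ex_intro _ q erefl).
have [idD annD] := dense_denominator_ideal (conj idI annI) qI.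
exists (denominator_ideal q); do 2!split=> //; split.
  by move=> z [_ Lqz _]; rewrite brC; exact: (submodN L_submod Lqz).
exists (alpha x); split; first exact: (tilde_denominator_ideal idI qI ta Lx).
by rewrite brC => /eqP; rewrite oppr_eq0 => /eqP.
Qed.

End LieAlgebra.

Unset Implicit Arguments.
Set Strict Implicit.

Theorem mainTheorem1 (Phi : comPzRingType) (Q : lmodType Phi)
  (br : Q -> Q -> Q) (L : Q -> Prop) :
  lie_bracket br -> lie_subalgebra br L -> semiprime br L ->
  (algebra_of_quotients br L <->
   (center_zero br /\
    forall mu : Q -> Q, AQ br mu -> mu <> @op0 _ Q ->
      exists I : Q -> Prop,
        lie_ideal br L I /\ ann_zero br L I /\
        (forall alpha, tilde br L I alpha -> A0 br L (opmul mu alpha)) /\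
        (forall alpha, tilde br L I alpha -> A0 br L (opmul alpha mu)) /\
        (exists alpha, tilde br L I alpha /\ opmul alpha mu <> @op0 _ Q) /\
        ((exists q, mu = ad br q) ->
           exists alpha x, tilde br L I alpha /\ L x /\ mu (alpha x) <> 0))).
Proof.
move=> lieQ subL semiprimeL; split.
- exact: quotients_criterion.
- exact: criterion_quotients.
Qed.
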